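(* Every simple rule defined on $\mathcal{E}_{\mathcal{SP}}$ satisfies not obvious manipulability (NOM).
   Context: Let $N=\{1,\dots,n\}$ be a finite set of agents. A preference $R_i$ is a continuous complete preorder on $\mathbb{R}_+\cup\{\infty\}$, with strict part $P_i$ and indifference $I_i$. Its peak $p(R_i)$ is the set of its maximal elements; when a singleton, we identify it with its element. $R_i$ is single-peaked if $p(R_i)$ is a singleton and for all $x,x'\in\mathbb{R}_+$, $xP_ix'$ whenever $x'<x\le p(R_i)$ or $p(R_i)\le x<x'$; $\mathcal{SP}$ denotes the set of these. An economy is $(R,\Omega)$ with $R\in\mathcal{SP}^n$, $\Omega>0$; $\mathcal{E}_{\mathcal{SP}}$ is the set of economies. A rule is a map $\varphi:\mathcal{E}_{\mathcal{SP}}\to\mathbb{R}^n_+$ with $\sum_j\varphi_j(R,\Omega)=\Omega$. Own-peak-onliness: $p(R_i')=p(R_i)$ implies $\varphi_i(R,\Omega)=\varphi_i(R_i',R_{-i},\Omega)$. Option set: $O^\varphi(R_i,\Omega)=\{\varphi_i(R_i,R_{-i},\Omega):R_{-i}\in\mathcal{SP}^{n-1}\}$. $R_i'$ is a manipulation of $\varphi$ at $(R_i,\Omega)$ if $\varphi_i(R_i',R_{-i},\Omega)P_i\varphi_i(R_i,R_{-i},\Omega)$ for some $R_{-i}$; an obvious manipulation if moreover for each $x'\in O^\varphi(R_i',\Omega)$ there is $x\in O^\varphi(R_i,\Omega)$ with $x'P_ix$. $\varphi$ is NOM if it admits no obvious manipulation. Simple rules: $z(R,\Omega)=\sum_jp(R_j)-\Omega$.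 Agent $i$ is simple if either $z(R,\Omega)\ge0$ and $p(R_i)<\Omega/n$, or $z(R,\Omega)\le0$ and $p(R_i)>\Omega/n$; $N^+(R,\Omega)$ is the set of simple agents, $N^-(R,\Omega)=N\setminus N^+(R,\Omega)$, and $E(R,\Omega)=\left|\Omega-\left(\sum_{j\in N^+}p(R_j)+|N^-|\frac{\Omega}{n}\right)\right|$. An own-peak-only rule $\varphi$ is simple if for every economy and every $i$: $\varphi_i=p(R_i)$ for $i\in N^+$; $\varphi_i=\frac{\Omega}{n}+\nu_i$ for $i\in N^-$ when $z\ge0$; $\varphi_i=\frac{\Omega}{n}-\nu_i$ for $i\in N^-$ when $z\le0$; with $0\le\nu_i\le|p(R_i)-\frac{\Omega}{n}|$ and $\sum_{j\in N^-}\nu_j=E(R,\Omega)$. *)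

From HB Require Import structures.
From mathcomp Require Import all_boot all_order all_algebra.
From mathcomp Require Import reals.
Set Implicit Arguments. Unset Strict Implicit. Unset Printing Implicit Defensive.
Import Order.TTheory GRing.Theory Num.Theory.
Local Open Scope ring_scope.

Section Defs.
Variable R : realType.

(* The extended half line R_+ ∪ {∞}: elements Fin x with 0 <= x, and Inf. *)
Inductive ext := Fin of R | Inf.

Definition indom (a : ext) : Prop :=
  match a with Fin x => 0 <= x | Inf => True end.

Definition pref := ext -> ext -> Prop.

Definition strict (Rl : pref) (a b : ext) : Prop := Rl a b /\ ~ Rl b a.

Definition complete_preorder (Rl : pref) : Prop :=
  (forall a b, indom a -> indom b -> Rl a b \/ Rl b a) /\
  (forall a b c, indom a -> indom b -> indom c -> Rl a b -> Rl b c -> Rl a c).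

(* convergence of sequences in [0, ∞] (order topology of the extended half line) *)
Definition conv (u : nat -> ext) (a : ext) : Prop :=
  match a with
  | Fin l => forall e : R, 0 < e -> exists N : nat, forall k : nat, (N <= k)%N ->
               exists x : R, u k = Fin x /\ `|x - l| < e
  | Inf => forall M : R, exists N : nat, forall k : nat, (N <= k)%N ->
               match u k with Fin x => is_true (M < x) | Inf => True end
  end.

(* continuity: upper and lower contour sets are (sequentially) closed in [0, ∞] *)
Definition pref_continuous (Rl : pref) : Prop :=
  forall (a b : ext) (u : nat -> ext), indom a -> indom b ->
    (forall k, indom (u k)) -> conv u b ->
    ((forall k, Rl (u k) a) -> Rl b a) /\ ((forall k, Rl a (u k)) -> Rl a b).

Definition is_max (Rl : pref) (a : ext) : Prop :=
  indom a /\ ~ (exists b, indom b /\ strict Rl b a).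

Definition has_peak (Rl : pref) (p : R) : Prop :=
  forall a, is_max Rl a <-> a = Fin p.

Definition single_peaked (Rl : pref) : Prop :=
  complete_preorder Rl /\ pref_continuous Rl /\
  exists p : R, has_peak Rl p /\
    forall x x' : R, 0 <= x -> 0 <= x' ->
      ((x' < x <= p) \/ (p <= x < x')) -> strict Rl (Fin x) (Fin x').

End Defs.

Arguments Fin {R}.
Arguments Inf {R}.

Definition profile (R : realType) (n : nat) := 'I_n -> pref R.

Definition economy (R : realType) (n : nat) (Rp : profile R n) (Om : R) : Prop :=
  (forall j, single_peaked (Rp j)) /\ 0 < Om.

Definition upd (R : realType) (n : nat) (Rp : profile R n) (i : 'I_n) (Ri : pref R)
  : profile R n := fun j => if j == i then Ri else Rp j.

Definition rule_map (R : realType) (n : nat) := profile R n -> R -> 'I_n -> R.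

Definition is_rule (R : realType) (n : nat) (phi : rule_map R n) : Prop :=
  forall Rp Om, economy Rp Om ->
    (forall i, 0 <= phi Rp Om i) /\ \sum_(j < n) phi Rp Om j = Om.

Definition own_peak_only (R : realType) (n : nat) (phi : rule_map R n) : Prop :=
  forall Rp Om (i : 'I_n) (Ri' : pref R) (p : R),
    economy Rp Om -> single_peaked Ri' ->
    has_peak (Rp i) p -> has_peak Ri' p ->
    phi Rp Om i = phi (upd Rp i Ri') Om i.

Definition in_option_set (R : realType) (n : nat) (phi : rule_map R n) (i : 'I_n)
  (Ri : pref R) (Om : R) (x : R) : Prop :=
  exists Rp : profile R n, (forall j, j != i -> single_peaked (Rp j)) /\
    x = phi (upd Rp i Ri) Om i.

Definition manipulation (R : realType) (n : nat) (phi : rule_map R n) (i : 'I_n)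
  (Ri Ri' : pref R) (Om : R) : Prop :=
  exists Rp : profile R n, (forall j, j != i -> single_peaked (Rp j)) /\
    strict Ri (Fin (phi (upd Rp i Ri') Om i)) (Fin (phi (upd Rp i Ri) Om i)).

Definition obvious_manipulation (R : realType) (n : nat) (phi : rule_map R n)
  (i : 'I_n) (Ri Ri' : pref R) (Om : R) : Prop :=
  manipulation phi i Ri Ri' Om /\
  forall x', in_option_set phi i Ri' Om x' ->
    exists x, in_option_set phi i Ri Om x /\ strict Ri (Fin x') (Fin x).

Definition NOM (R : realType) (n : nat) (phi : rule_map R n) : Prop :=
  forall (i : 'I_n) (Ri Ri' : pref R) (Om : R),
    single_peaked Ri -> single_peaked Ri' -> 0 < Om ->
    ~ obvious_manipulation phi i Ri Ri' Om.

Definition excess (R : realType) (n : nat) (p : 'I_n -> R) (Om : R) : R :=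
  \sum_(j < n) p j - Om.

Definition simple_agent (R : realType) (n : nat) (p : 'I_n -> R) (Om : R)
  (i : 'I_n) : bool :=
  ((0 <= excess p Om) && (p i < Om / n%:R)) ||
  ((excess p Om <= 0) && (Om / n%:R < p i)).

Definition E_val (R : realType) (n : nat) (p : 'I_n -> R) (Om : R) : R :=
  `| Om - (\sum_(j < n | simple_agent p Om j) p j
           + #|[pred j | ~~ simple_agent p Om j]|%:R * (Om / n%:R)) |.

Definition simple_rule (R : realType) (n : nat) (phi : rule_map R n) : Prop :=
  own_peak_only phi /\
  forall (Rp : profile R n) (Om : R) (p : 'I_n -> R),
    economy Rp Om -> (forall j, has_peak (Rp j) (p j)) ->
    exists nu : 'I_n -> R,
      (forall i, simple_agent p Om i -> phi Rp Om i = p i) /\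
      (0 <= excess p Om -> forall i, ~~ simple_agent p Om i ->
         phi Rp Om i = Om / n%:R + nu i) /\
      (excess p Om <= 0 -> forall i, ~~ simple_agent p Om i ->
         phi Rp Om i = Om / n%:R - nu i) /\
      (forall i, ~~ simple_agent p Om i -> 0 <= nu i <= `|p i - Om / n%:R|) /\
      \sum_(j < n | ~~ simple_agent p Om j) nu j = E_val p Om.

From mathcomp Require Import all_boot all_order all_algebra.
From mathcomp Require Import reals.
From mathcomp Require Import ring lra.
Set Implicit Arguments. Unset Strict Implicit. Unset Printing Implicit Defensive.
Import Order.TTheory GRing.Theory Num.Theory.
Local Open Scope ring_scope.

(** Whatever agent i reports, it can be left with exactly the equal share
    Omega/n: when all other agents have peak Omega/n nobody is simple and
    E = 0, so every share is Omega/n.  Under the truthful report a simple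
    rule always gives agent i an amount between Omega/n and its peak, which
    single-peakedness ranks at least as high as Omega/n.  So the option
    Omega/n of any lie is never strictly better than all truthful options. *)

Section DistancePreference.
Variable R : realType.

Definition dist_pref (c : R) : pref R := fun a b =>
  match a, b with
  | Fin x, Fin y => `|x - c| <= `|y - c|
  | Fin _, Inf => True
  | Inf, Fin _ => False
  | Inf, Inf => True
  end.

Lemma dist_pref_strict (c x y : R) :
  `|x - c| < `|y - c| -> strict (dist_pref c) (Fin x) (Fin y).
Proof. by move=> lt_xy; split; [apply: ltW | rewrite /= leNgt lt_xy]. Qed.

Lemma dist_pref_complete_preorder (c : R) : complete_preorder (dist_pref c).
Proof.
split.
- move=> [x|] [y|] _ _ //=; [|by left|by right|by left].
  by case: (lerP `|x - c| `|y - c|) => [|/ltW]; [left|right].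
- by move=> [x|] [y|] [z|] _ _ _ //=; apply: le_trans.
Qed.

Lemma dist_pref_continuous (c : R) : pref_continuous (dist_pref c).
Proof.
move=> a b u _ _ _ u_b; split.
- case: b u_b => [l|] u_b; case: a => [y|] //= below.
    rewrite leNgt; apply/negP => lt_yl.
    have e_gt0 : 0 < `|l - c| - `|y - c| by rewrite subr_gt0.
    have [N /(_ N (leqnn N)) [x [uN_x x_l]]] := u_b _ e_gt0.
    have := below N; rewrite uN_x /= => le_xy.
    have := ler_distD x l c; rewrite [`|l - x|]distrC; lra.
  have [N /(_ N (leqnn N))] := u_b (c + `|y - c|).
  have := below N; case: (u N) => [x|] //= le_xy lt_x.
  have := ler_norm (x - c); lra.
- case: b u_b => [l|] u_b; case: a => [y|] //= above.
    rewrite leNgt; apply/negP => lt_ly.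
    have e_gt0 : 0 < `|y - c| - `|l - c| by rewrite subr_gt0.
    have [N /(_ N (leqnn N)) [x [uN_x x_l]]] := u_b _ e_gt0.
    have := above N; rewrite uN_x /= => le_yx.
    have := ler_distD l x c; lra.
  have [N /(_ N (leqnn N)) [x [uN_x _]]] := u_b 1 ltr01.
  by have := above N; rewrite uN_x.
Qed.

Lemma dist_pref_peak (c : R) : 0 <= c -> has_peak (dist_pref c) c.
Proof.
move=> c_ge0 [x|]; split.
- case=> _ no_better; congr Fin; apply/eqP/negPn/negP => x_neq_c.
  apply: no_better; exists (Fin c); split=> //; apply: dist_pref_strict.
  by rewrite subrr normr0 normr_gt0 subr_eq0.
- case=> ->; split=> // -[[y|] [_ [_]]] //=.
  by rewrite subrr normr0 normr_ge0.
- by case=> _ []; exists (Fin c); do !split.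
- by [].
Qed.

Lemma dist_pref_single_peaked (c : R) : 0 <= c -> single_peaked (dist_pref c).
Proof.
move=> c_ge0; split; first exact: dist_pref_complete_preorder.
split; first exact: dist_pref_continuous.
exists c; split; first exact: dist_pref_peak.
move=> x x' _ _ [] /andP [lt_x'x le_xp]; apply: dist_pref_strict.
  by rewrite !ler0_norm; lra.
by rewrite !ger0_norm; lra.
Qed.

End DistancePreference.

Section SinglePeaked.
Variable R : realType.

Definition between (a b x : R) : bool := (a <= x <= b) || (b <= x <= a).

Lemma has_peak_uniq (Rl : pref R) (p q : R) :
  has_peak Rl p -> has_peak Rl q -> p = q.
Proof. by move=> hp hq; have /hq [] : is_max Rl (Fin p) by apply/hp. Qed.

Lemma single_peaked_between (Rl : pref R) (p c x : R) :
  single_peaked Rl -> has_peak Rl p -> 0 <= c -> between c p x ->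
  Rl (Fin x) (Fin c).
Proof.
move=> [[total _] [_ [q [peak_q monotone]]]] peak_p c_ge0 x_between.
have eq_pq := has_peak_uniq peak_p peak_q; subst q.
have [->|x_neq_c] := eqVneq x c; first by case: (total (Fin c) (Fin c)).
have p_ge0 : 0 <= p by have [] := (peak_p (Fin p)).2 erefl.
have x_ge0 : 0 <= x by case/orP: x_between => /andP[]; lra.
apply: (monotone x c x_ge0 c_ge0 _).1.
case/orP: x_between => /andP [le1 le2]; [left|right]; apply/andP; split=> //.
  by rewrite lt_def x_neq_c.
by rewrite lt_def eq_sym x_neq_c.
Qed.

End SinglePeaked.

Section Economies.
Variables (R : realType) (n : nat).

Lemma economy_upd (Rp : profile R n) (i : 'I_n) (Ri : pref R) (Om : R) :
  single_peaked Ri -> (forall j, j != i -> single_peaked (Rp j)) -> 0 < Om ->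
  economy (upd Rp i Ri) Om.
Proof.
move=> sp_Ri sp_others Om_gt0; split=> // j.
by rewrite /upd; case: eqVneq => [_|/sp_others].
Qed.

Lemma economy_peaks (Rp : profile R n) (Om : R) :
  economy Rp Om -> exists pk : 'I_n -> R, forall j, has_peak (Rp j) (pk j).
Proof.
case=> sp _; apply: (@fin_all_exists _ (fun=> R) (fun j p => has_peak (Rp j) p)) => j.
by have [p [peak_p _]] := (sp j).2.2; exists p.
Qed.

Lemma equal_share_ge0 (Om : R) : 0 < Om -> 0 <= Om / n%:R.
Proof. by move=> Om_gt0; rewrite divr_ge0 ?ler0n ?ltW. Qed.

Lemma equal_shares_sum (Om : R) : (0 < n)%N -> (Om / n%:R) *+ n = Om.
Proof. by move=> n_gt0; rewrite -mulr_natr divfK // pnatr_eq0 -lt0n. Qed.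

Lemma excess_single_deviation (pk : 'I_n -> R) (Om : R) (i : 'I_n) :
  (forall j, j != i -> pk j = Om / n%:R) -> excess pk Om = pk i - Om / n%:R.
Proof.
move=> others.
have n_gt0 : (0 < n)%N := leq_ltn_trans (leq0n i) (ltn_ord i).
rewrite /excess (eq_bigr (fun j => Om / n%:R + (if j == i then pk i - Om / n%:R else 0)));
  last by move=> j _; case: eqVneq => [->|/others ->]; rewrite ?addr0 //; ring.
rewrite big_split /= sumr_const card_ord equal_shares_sum //.
by rewrite -big_mkcond big_pred1_eq; ring.
Qed.

Lemma single_deviation_no_simple_agent (pk : 'I_n -> R) (Om : R) (i : 'I_n) :
  (forall j, j != i -> pk j = Om / n%:R) -> forall j, ~~ simple_agent pk Om j.
Proof.
move=> others j; rewrite /simple_agent (excess_single_deviation others).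
by case: (eqVneq j i) => [->|/others ->]; apply/negP; case/orP => /andP[]; lra.
Qed.

Lemma E_val_no_simple_agent (pk : 'I_n -> R) (Om : R) :
  (0 < n)%N -> (forall j, ~~ simple_agent pk Om j) -> E_val pk Om = 0.
Proof.
move=> n_gt0 none_simple.
rewrite /E_val big_pred0 => [|j]; last exact: negbTE.
rewrite (@eq_card _ _ predT) => [|j]; last by rewrite !inE none_simple.
by rewrite card_ord add0r mulr_natl equal_shares_sum // subrr normr0.
Qed.

End Economies.

Section SimpleRule.
Variables (R : realType) (n : nat) (phi : rule_map R n).
Hypothesis phi_simple : simple_rule phi.

Lemma simple_rule_share_between (Rp : profile R n) (Om : R) (pk : 'I_n -> R) (i : 'I_n) :
  economy Rp Om -> (forall j, has_peak (Rp j) (pk j)) ->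
  between (Om / n%:R) (pk i) (phi Rp Om i).
Proof.
move=> eco peaks.
have [nu [simple_share [share_up [share_down [nu_bounds _]]]]] :=
  phi_simple.2 _ _ _ eco peaks.
have [simple_i|not_simple_i] := boolP (simple_agent pk Om i).
  by rewrite simple_share // /between !lexx andbT andTb le_total.
have /andP [nu_ge0 nu_le] := nu_bounds i not_simple_i.
rewrite /between; have [excess_ge0|excess_lt0] := lerP 0 (excess pk Om).
  have le_c_pk : Om / n%:R <= pk i.
    rewrite leNgt; apply: contra not_simple_i => lt_pk_c.
    by rewrite /simple_agent excess_ge0 lt_pk_c.
  rewrite ger0_norm ?subr_ge0 // in nu_le.
  by rewrite share_up //; apply/orP; left; apply/andP; split; lra.
have le_pk_c : pk i <= Om / n%:R.
  rewrite leNgt; apply: contra not_simple_i => lt_c_pk.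
  by rewrite /simple_agent (ltW excess_lt0) lt_c_pk orbT.
rewrite ler0_norm ?subr_le0 // in nu_le.
by rewrite share_down ?(ltW excess_lt0) //; apply/orP; right; apply/andP; split; lra.
Qed.

Lemma simple_rule_equal_division (Rp : profile R n) (Om : R) (pk : 'I_n -> R) (i : 'I_n) :
  economy Rp Om -> (forall j, has_peak (Rp j) (pk j)) ->
  (forall j, j != i -> pk j = Om / n%:R) -> phi Rp Om i = Om / n%:R.
Proof.
move=> eco peaks others.
have n_gt0 : (0 < n)%N := leq_ltn_trans (leq0n i) (ltn_ord i).
have none_simple := single_deviation_no_simple_agent others.
have [nu [_ [share_up [share_down [nu_bounds nu_sum]]]]] :=
  phi_simple.2 _ _ _ eco peaks.
have nu_i : nu i = 0.
  apply: (@psumr_eq0P _ _ (fun j => ~~ simple_agent pk Om j) nu _ _ i (none_simple i)).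
    by move=> j /nu_bounds /andP [].
  by rewrite nu_sum E_val_no_simple_agent.
have [excess_ge0|excess_lt0] := lerP 0 (excess pk Om).
  by rewrite share_up // nu_i addr0.
by rewrite share_down ?(ltW excess_lt0) // nu_i subr0.
Qed.

Lemma equal_division_in_option_set (i : 'I_n) (Ri : pref R) (Om : R) :
  single_peaked Ri -> 0 < Om -> in_option_set phi i Ri Om (Om / n%:R).
Proof.
move=> sp_Ri Om_gt0.
have [p [peak_p _]] := sp_Ri.2.2.
pose Rp := fun _ : 'I_n => dist_pref (Om / n%:R).
have sp_Rp : forall j, j != i -> single_peaked (Rp j).
  by move=> j _; apply/dist_pref_single_peaked/equal_share_ge0.
exists Rp; split=> //.
pose pk j := if j == i then p else Om / n%:R.
apply/esym/(simple_rule_equal_division (pk := pk)).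
- exact: economy_upd.
- move=> j; rewrite /upd /pk; case: eqP => _ //.
  exact/dist_pref_peak/equal_share_ge0.
- by move=> j /negbTE j_neq_i; rewrite /pk j_neq_i.
Qed.

Lemma option_set_pref_equal_division (i : 'I_n) (Ri : pref R) (Om x : R) :
  single_peaked Ri -> 0 < Om -> in_option_set phi i Ri Om x ->
  Ri (Fin x) (Fin (Om / n%:R)).
Proof.
move=> sp_Ri Om_gt0 [Rp [sp_others ->]].
have eco := economy_upd sp_Ri sp_others Om_gt0.
have [pk peaks] := economy_peaks eco.
have peak_i : has_peak Ri (pk i) by have := peaks i; rewrite /upd eqxx.
apply: (single_peaked_between sp_Ri peak_i (equal_share_ge0 _ Om_gt0)).
exact: simple_rule_share_between eco peaks.
Qed.

End SimpleRule.

Theorem theorem1 (R : realType) (n : nat) (phi : rule_map R n) :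
  is_rule phi -> simple_rule phi -> NOM phi.
Proof.
move=> _ phi_simple i Ri Ri' Om sp_Ri sp_Ri' Om_gt0 [_ obvious].
have [x [x_opt [_ x_worse]]] :=
  obvious _ (equal_division_in_option_set phi_simple i sp_Ri' Om_gt0).
exact/x_worse/(option_set_pref_equal_division phi_simple sp_Ri Om_gt0 x_opt).
Qed.
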